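(* Let $n$ be even, $F\colon\mathbb F_2^n\to\mathbb F_2^n$ a quadratic APN function, and $\mathcal V_F=\{V_b\colon b\in\mathbb F_2^n\setminus\{0\},\ \dim(V_b)\ge 1\}$. Then for every $b\in\mathbb F_2^n\setminus\{0\}$ the component $F_b$ has amplitude $2^{\frac{n+\dim(V_b)}{2}}$. In particular, if $F$ has amplitude distribution $[0^{k_0},2^{k_2},\dots,(n-2)^{k_{n-2}},n^{k_n}]$, then $\mathcal V_F$ is a vector space partition of $\mathbb F_2^n$ of type $[2^{k_2},\dots,(n-2)^{k_{n-2}},n^{k_n}]$.
   Context: $\langle\cdot,\cdot\rangle$ is the standard dot product. $F$ is APN if for every $a\neq0$ and every $c$, $F(x)+F(x+a)=c$ has at most 2 solutions; $F$ is quadratic if each component $F_b(x)=\langle b,F(x)\rangle$ is a quadratic form plus an affine function. Walsh transform: $W_F(b,a)=\sum_{x\in\mathbb F_2^n}(-1)^{F_b(x)+\langle x,a\rangle}$. For quadratic $F$ and fixed $b$ there is $0\le k\le n$ with $|W_F(b,a)|\in\{0,2^{(n+k)/2}\}$ for all $a$ (the nonzero value attained); $2^{(n+k)/2}$ is the amplitude of $F_b$. The amplitude distribution $[0^{k_0},1^{k_1},\dots,n^{k_n}]$ records that exactly $k_i$ nonzero $b$ give amplitude $2^{(n+i)/2}$. With $D_{F,a}(x)=F(x)+F(x+a)$, $H_b=\{x:\langle b,x\rangle=0\}$, $\overline{H_b}=\{x:\langle b,x\rangle=1\}$: $T_b=\{a:\mathrm{Im}(D_{F,a})=H_b\}\cup\{0\}$,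 $\overline{T_b}=\{a:\mathrm{Im}(D_{F,a})=\overline{H_b}\}$, $V_b=T_b\cup\overline{T_b}$ (a subspace). A vector space partition of $\mathbb F_2^n$ is a set of nonzero subspaces such that each nonzero vector lies in exactly one of them; it has type $[d_1^{n_1},\dots,d_k^{n_k}]$ ($d_1<\dots<d_k$) if it contains exactly $n_i$ subspaces of dimension $d_i$. *)

From HB Require Import structures.
From mathcomp Require Import all_boot all_order all_algebra.
Set Implicit Arguments. Unset Strict Implicit. Unset Printing Implicit Defensive.
Import GRing.Theory Num.Theory.
Local Open Scope ring_scope.

Notation vec n := 'rV['F_2]_n.

Definition dot n (u v : vec n) : 'F_2 := \sum_(i < n) u ord0 i * v ord0 i.

Definition sgn (t : 'F_2) : int := (-1) ^+ (nat_of_ord t).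

Definition quadratic n (F : vec n -> vec n) : Prop :=
  forall b : vec n, exists (Q : 'M['F_2]_n) (l : vec n) (c : 'F_2),
    forall x : vec n,
      dot b (F x) = \sum_(i < n) \sum_(j < n) Q i j * x ord0 i * x ord0 j + dot l x + c.

Definition APN n (F : vec n -> vec n) : Prop :=
  forall a : vec n, a != 0 -> forall c : vec n,
    (#|[set x : vec n | (F x + F (x + a))%R == c]| <= 2)%N.

Definition walsh n (F : vec n -> vec n) (b a : vec n) : int :=
  \sum_(x : vec n) sgn (dot b (F x) + dot x a).

(* F_b has amplitude 2^((n+k)/2): |W_F(b,a)| in {0, 2^((n+k)/2)} for all a,
   the nonzero value being attained (stated with squares to stay in int). *)
Definition has_amplitude n (F : vec n -> vec n) (b : vec n) (k : nat) : bool :=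
  [forall a : vec n, (walsh F b a == 0) || (walsh F b a ^+ 2 == 2 ^+ (n + k))] &&
  [exists a : vec n, walsh F b a ^+ 2 == 2 ^+ (n + k)].

Definition deriv n (F : vec n -> vec n) (a x : vec n) : vec n := F x + F (x + a).
Definition imD n (F : vec n -> vec n) (a : vec n) : {set vec n} :=
  [set deriv F a x | x : vec n].

Definition Hb n (b : vec n) : {set vec n} := [set x : vec n | dot b x == 0].
Definition Hbbar n (b : vec n) : {set vec n} := [set x : vec n | dot b x == 1].

Definition Tb n (F : vec n -> vec n) (b : vec n) : {set vec n} :=
  [set a : vec n | imD F a == Hb b] :|: [set 0].
Definition Tbbar n (F : vec n -> vec n) (b : vec n) : {set vec n} :=
  [set a : vec n | imD F a == Hbbar b].
Definition Vb n (F : vec n -> vec n) (b : vec n) : {set vec n} :=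
  Tb F b :|: Tbbar F b.

Definition dimS n (U : {set vec n}) : nat := \dim <<enum U>>%VS.

Definition is_subspace n (U : {set vec n}) : Prop :=
  0 \in U /\ (forall x y, x \in U -> y \in U -> x + y \in U).

Definition vs_partition n (P : {set {set vec n}}) : Prop :=
  (forall U, U \in P -> is_subspace U /\ U != [set 0]) /\
  (forall x : vec n, x != 0 -> exists! U, U \in P /\ x \in U).

Definition VF n (F : vec n -> vec n) : {set {set vec n}} :=
  [set Vb F b | b in [set b : vec n | (b != 0) && (1 <= dimS (Vb F b))%N]].

From HB Require Import structures.
From mathcomp Require Import all_boot all_order all_algebra all_field ring zify.
(* Imported after MathComp so that [deriv] is the derivative of Defs, not that of polynomials. *)
From Pilot Require Import Defs.
Import GRing.Theory.
Set Implicit Arguments.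
Unset Strict Implicit.
Unset Printing Implicit Defensive.
Local Open Scope ring_scope.

(* For quadratic F the second derivative y |-> D_aF(y) + D_aF(0) is linear, so the set R_b of
   directions a along which D_aF_b is constant is a subspace and, substituting y = x + u,
   W_F(b,a)^2 = 2^n * sum_(u in R_b) (-1)^(<b,D_uF(0)> + <u,a>).  The exponent is linear on R_b,
   so this is 0 or 2^(n + dim R_b), and Parseval excludes 0 for all a: F_b has amplitude
   2^((n + dim R_b)/2).  APN makes each D_a (a <> 0) two-to-one, so its image has 2^(n-1)
   points; it therefore equals H_b or its complement exactly when a is in R_b, i.e. V_b = R_b.
   A hyperplane determines b, so distinct V_b meet only in 0, and every a <> 0 lies in some R_b
   because the linear map y |-> D_aF(y) + D_aF(0) kills a, so its image avoids a hyperplane. *)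

Lemma F2_two : (2 : 'F_2) = 0. Proof. exact: val_inj. Qed.

Lemma F2_0or1 (t : 'F_2) : t = 0 \/ t = 1.
Proof. by case: t => [[|[|k]] // ?]; [left | right]; apply: val_inj. Qed.

Lemma F2_neq0 (t : 'F_2) : t != 0 -> t = 1.
Proof. by case: (F2_0or1 t) => ->. Qed.

Lemma F2_level_eq (s s' t : 'F_2) : (s == t) = (s' == t) -> s = s'.
Proof. by case: (F2_0or1 s) (F2_0or1 s') (F2_0or1 t) => -> [] -> [] ->. Qed.

Lemma F2_addr_eq0 (s t : 'F_2) : (s + t == 0) = (s == t).
Proof. by case: (F2_0or1 s) (F2_0or1 t) => -> [] ->. Qed.

Lemma F2_addrr (t : 'F_2) : t + t = 0.
Proof. by ring: F2_two. Qed.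

Lemma sgnD (s t : 'F_2) : sgn (s + t) = sgn s * sgn t.
Proof. by case: (F2_0or1 s) => ->; case: (F2_0or1 t) => ->. Qed.

Lemma PoszX2 m : (2 ^ m)%N%:Z = 2 ^+ m.
Proof. by rewrite -natz natrX. Qed.

Section Dot.
Context {n : nat}.
Implicit Types (b u v x : vec n).

Lemma addvv u : u + u = 0.
Proof. by apply/rowP => i; rewrite !mxE F2_addrr. Qed.

Lemma addvK v u : u + v + v = u.
Proof. by rewrite -addrA addvv addr0. Qed.

Lemma card_vec : #|{: vec n}| = (2 ^ n)%N.
Proof. by rewrite card_mx card_Fp // mul1n. Qed.

Lemma dotDr b u v : dot b (u + v) = dot b u + dot b v.
Proof. by rewrite /dot -big_split; apply: eq_bigr => i _; rewrite mxE mulrDr. Qed.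

Lemma dotDl b u v : dot (u + v) b = dot u b + dot v b.
Proof. by rewrite /dot -big_split; apply: eq_bigr => i _; rewrite mxE mulrDl. Qed.

Lemma dot0r b : dot b 0 = 0.
Proof. by rewrite /dot big1 // => i _; rewrite mxE mulr0. Qed.

Lemma dot0l b : dot 0 b = 0.
Proof. by rewrite /dot big1 // => i _; rewrite mxE mul0r. Qed.

Lemma dotC u v : dot u v = dot v u.
Proof. by apply: eq_bigr => i _; rewrite mulrC. Qed.

Lemma dot_mxE u v : dot u v = (u *m v^T) 0 0.
Proof. by rewrite mxE; apply: eq_bigr => i _; rewrite mxE. Qed.

Lemma dot_delta i v : dot (delta_mx 0 i) v = v 0 i.
Proof.
rewrite /dot (bigD1 i) //= big1 ?addr0 => [|j ji]; first by rewrite mxE !eqxx mul1r.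
by rewrite mxE eqxx (negbTE ji) mul0r.
Qed.

Lemma dot_inj u v : (forall b, dot b u = dot b v) -> u = v.
Proof. by move=> e; apply/rowP => i; rewrite -!dot_delta e. Qed.

Lemma dot_level_inj b b' (t : 'F_2) :
  (forall x, (dot b x == t) = (dot b' x == t)) -> b = b'.
Proof. by move=> e; apply: dot_inj => x; rewrite !(dotC x); apply: F2_level_eq (e x). Qed.

Lemma dot_all0 u : [forall a, dot u a == 0] = (u == 0).
Proof.
apply/forallP/eqP => [u0 | -> a]; last by rewrite dot0l.
by apply: dot_inj => b; rewrite dot0r dotC; apply/eqP.
Qed.

Lemma dot_neq0 b : b != 0 -> exists e, dot b e = 1.
Proof.
rewrite -dot_all0 => /forallPn [e be].
by exists e; apply: F2_neq0.
Qed.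

End Dot.

Section Hyperplanes.
Context {n : nat}.
Implicit Types (b x : vec n).

Lemma Hbbar_setC b : Hbbar b = ~: Hb b.
Proof. by apply/setP => x; rewrite !inE; case: (F2_0or1 (dot b x)) => ->. Qed.

Lemma card_Hbbar_Hb b : b != 0 -> #|Hbbar b| = #|Hb b|.
Proof.
move=> /dot_neq0 [e be].
have -> : Hbbar b = [set x + e | x in Hb b].
  apply/setP => x; apply/idP/imsetP => [xH | [y yH ->]].
    exists (x + e); last by rewrite addvK.
    by move: xH; rewrite !inE dotDr be => /eqP ->; rewrite F2_addrr.
  by move: yH; rewrite !inE dotDr be => /eqP ->; rewrite add0r.
by rewrite card_imset //; apply: addIr.
Qed.

Lemma card_Hb b : b != 0 -> (2 * #|Hb b|)%N = (2 ^ n)%N.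
Proof.
by move=> bn0; rewrite -card_vec -(cardsC (Hb b)) -Hbbar_setC card_Hbbar_Hb // mul2n addnn.
Qed.

Lemma card_Hbbar b : b != 0 -> (2 * #|Hbbar b|)%N = (2 ^ n)%N.
Proof. by move=> bn0; rewrite card_Hbbar_Hb // card_Hb. Qed.

Lemma Hb_inj : injective (@Hb n).
Proof. by move=> b b' /setP e; apply: (dot_level_inj (t := 0)) => x; move: (e x); rewrite !inE. Qed.

Lemma Hbbar_inj : injective (@Hbbar n).
Proof. by move=> b b' /setP e; apply: (dot_level_inj (t := 1)) => x; move: (e x); rewrite !inE. Qed.

Lemma Hb_neq_Hbbar b b' : Hb b != Hbbar b'.
Proof. by apply/eqP => /setP /(_ 0); rewrite !inE !dot0r. Qed.

End Hyperplanes.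

Section Subspaces.
Context {n : nat}.
Implicit Types (S : {set vec n}) (mu : vec n -> 'F_2).

Lemma is_subspaceT : is_subspace [set: vec n].
Proof. by split=> [|x y]; rewrite !inE. Qed.

Lemma subspace_addr S u v : is_subspace S -> v \in S -> (u + v \in S) = (u \in S).
Proof.
case=> _ SD vS; apply/idP/idP => [uvS | uS]; last exact: SD.
by rewrite -(addvK v u); apply: SD.
Qed.

(* Pairing u with u + u0, where mu u0 = 1, cancels the sum termwise. *)
Lemma sum_sgn_additive S mu : is_subspace S -> {in S &, {morph mu : u v / u + v}} ->
  \sum_(u in S) sgn (mu u) = if [forall u in S, mu u == 0] then #|S|%:Z else 0.
Proof.
move=> Ssub muD; case: ifP => [/forall_inP mu0 | /negbT /forall_inPn [u0 u0S /F2_neq0 mu1]].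
  rewrite (eq_bigr (fun _ => 1)) => [|u uS]; last by rewrite (eqP (mu0 u uS)).
  by rewrite sumr_const natz.
set X := \sum_(u in S) _; suff : X = - X by lia.
rewrite {1}/X (reindex_inj (addIr u0)) /= -sumrN.
apply: eq_big => [u | u]; first exact: subspace_addr.
by rewrite subspace_addr // => uS; rewrite muD // mu1 sgnD mulrN1.
Qed.

Lemma sum_sgn_additiveT mu : {morph mu : u v / u + v} ->
  \sum_u sgn (mu u) = if [forall u, mu u == 0] then (2 ^ n)%N%:Z else 0.
Proof.
move=> muD; have := sum_sgn_additive is_subspaceT (in2W muD).
rewrite cardsT card_vec (eq_bigl _ _ (in_setT (T := _))) => ->.
by congr (if _ then _ else _); apply: eq_forallb => u; rewrite in_setT.
Qed.

Lemma card_subspace S : is_subspace S -> #|S| = (2 ^ dimS S)%N.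
Proof.
case=> S0 SD; have spanS v : (v \in <<enum S>>%VS) = (v \in S).
  apply/idP/idP => [/coord_span -> | vS]; last by apply: memv_span; rewrite mem_enum.
  apply: (big_ind (fun w => w \in S)) => // i _.
  case: (F2_0or1 (coord (enum_tuple S) i v)) => ->; first by rewrite scale0r.
  by rewrite scale1r -mem_enum mem_nth // -cardE ltn_ord.
by rewrite /dimS -(eq_card spanS) card_vspace card_Fp.
Qed.

Lemma subspace_dim_gt0P S : is_subspace S ->
  reflect (exists2 x, x \in S & x != 0) (0 < dimS S)%N.
Proof.
move=> Ssub; rewrite -(ltn_exp2l 0 _ (isT : (1 < 2)%N)) expn0 -card_subspace //.
apply: (iffP card_gt1P) => [[x [y [xS yS]]] | [x xS xn0]].
  by have [-> | yn0 ] := eqVneq y 0; [exists x; rewrite // eq_sym | exists y].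
by exists 0, x; rewrite eq_sym xn0; case: Ssub.
Qed.

End Subspaces.

Lemma has_amplitude_inj n (F : vec n -> vec n) b k1 k2 :
  has_amplitude F b k1 -> has_amplitude F b k2 -> k1 = k2.
Proof.
case/andP => _ /existsP [a /eqP W1] /andP [/forallP /(_ a) + _].
rewrite W1 => /orP [/eqP W0 | ].
  by move: W1; rewrite W0 expr2 mul0r -PoszX2 => -[] /esym /eqP; rewrite expn_eq0.
by rewrite -!PoszX2 => /eqP [] /eqP; rewrite eqn_exp2l // eqn_add2l => /eqP.
Qed.

(* The matrix of [f] is singular, hence so is its transpose. *)
Lemma additive_annihilator n (f : vec n -> vec n) x :
  {morph f : y z / y + z} -> x != 0 -> f x = 0 ->
  exists2 b, b != 0 & forall y, dot b (f y) = 0.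
Proof.
move=> fD xn0 fx0; have f0 : f 0 = 0 by apply/(addrI (f 0)); rewrite -fD !addr0.
pose M := \matrix_(i, j) f (delta_mx 0 i) 0 j.
have fM y : f y = y *m M.
  rewrite {1}(row_sum_delta y) (big_morph f fD f0) mulmx_sum_row; apply: eq_bigr => i _.
  have -> : f (y 0 i *: delta_mx 0 i) = y 0 i *: f (delta_mx 0 i).
    by case: (F2_0or1 (y 0 i)) => ->; rewrite ?scale0r ?f0 ?scale1r.
  by congr (_ *: _); apply/rowP => j; rewrite !mxE.
have /det0P [b bn0 bM] : \det M^T == 0.
  by rewrite det_tr; apply/det0P; exists x; rewrite // -fM.
exists b => // y; rewrite fM dotC dot_mxE -mulmxA -(trmxK M) -trmx_mul bM.
by rewrite trmx0 mulmx0 mxE.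
Qed.

Section Derivatives.
Context {n : nat}.
Variable F : vec n -> vec n.
Implicit Types (a b u v x y : vec n).

Lemma deriv0 x : deriv F 0 x = 0.
Proof. by rewrite /deriv addr0 addvv. Qed.

Lemma deriv_addl u v x : deriv F (u + v) x = deriv F u x + deriv F v (x + u).
Proof. by rewrite /deriv !addrA addvK. Qed.

Lemma mem_imD a x : deriv F a x \in imD F a.
Proof. exact: imset_f. Qed.

Lemma mem_Vb b a : (a \in Vb F b) = [|| a == 0, imD F a == Hb b | imD F a == Hbbar b].
Proof. by rewrite !inE orbAC orbC. Qed.

Lemma Vb_mem_inj b b' x : x != 0 -> x \in Vb F b -> x \in Vb F b' -> b = b'.
Proof.
move=> xn0; rewrite !mem_Vb (negbTE xn0) /= => /orP[] /eqP-> /orP[] /eqP.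
- exact: Hb_inj.
- by move/eqP; rewrite (negbTE (Hb_neq_Hbbar _ _)).
- by move/esym/eqP; rewrite (negbTE (Hb_neq_Hbbar _ _)).
- exact: Hbbar_inj.
Qed.

Lemma APN_card_fiber a x0 : APN F -> a != 0 ->
  #|[set x | deriv F a x == deriv F a x0]| = 2%N.
Proof.
move=> Fapn an0; apply/eqP; rewrite eqn_leq Fapn //=.
have sub : [set x0; x0 + a] \subset [set x | deriv F a x == deriv F a x0].
  by apply/subsetP => x; rewrite !inE => /orP [] /eqP ->; rewrite // /deriv addvK addrC.
apply: leq_trans (subset_leq_card sub); rewrite cards2 ltnS lt0b.
by apply: contra an0 => /eqP/(canLR (addKr x0)); rewrite addrC subrr => <-.
Qed.

Lemma APN_card_imD a : APN F -> a != 0 -> (2 * #|imD F a|)%N = (2 ^ n)%N.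
Proof.
move=> Fapn an0; rewrite -card_vec -[in RHS]sum1_card.
rewrite (partition_big (deriv F a) (mem (imD F a))) => [|x _]; last exact: mem_imD.
rewrite mulnC -sum_nat_const; apply: eq_bigr => y /imsetP [x0 _ ->].
by rewrite sum1_card -[LHS](APN_card_fiber x0 Fapn an0); apply: eq_card => x; rewrite !inE.
Qed.

Lemma APN_imD_eq a (S : {set vec n}) : APN F -> a != 0 ->
  (2 * #|S|)%N = (2 ^ n)%N -> (forall x, deriv F a x \in S) -> imD F a = S.
Proof.
move=> Fapn an0 cardS derivS; apply/eqP; rewrite eqEcard; apply/andP; split.
  by apply/subsetP => y /imsetP [x _ ->].
by rewrite -(leq_pmul2l (isT : (0 < 2)%N)) cardS APN_card_imD.
Qed.

End Derivatives.

Definition polar {n} (g : vec n -> 'F_2) (x y : vec n) : 'F_2 := g (x + y) + g x + g y + g 0.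

Definition qform {n} (Q : 'M['F_2]_n) (w : vec n) : 'F_2 := \sum_i \sum_j Q i j * w 0 i * w 0 j.

Section Polar.
Context {n : nat}.
Implicit Types (g h : vec n -> 'F_2) (x y : vec n).

Lemma polarD g h x y : polar (fun w => g w + h w) x y = polar g x y + polar h x y.
Proof. by rewrite /polar; ring. Qed.

Lemma polar_const (c : 'F_2) x y : polar (fun=> c) x y = 0.
Proof. by rewrite /polar /= F2_addrr add0r F2_addrr. Qed.

Lemma polar_dot (l : vec n) x y : polar (dot l) x y = 0.
Proof. by rewrite /polar dotDr dot0r addr0 -addrA F2_addrr. Qed.

Lemma polar_qform (Q : 'M['F_2]_n) x y :
  polar (qform Q) x y = \sum_i \sum_j Q i j * (x 0 i * y 0 j + y 0 i * x 0 j).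
Proof.
rewrite /polar /qform -!big_split; apply: eq_bigr => i _.
by rewrite -!big_split; apply: eq_bigr => j _; rewrite /= !mxE; ring: F2_two.
Qed.

Lemma eq_polar g h : g =1 h -> polar g =2 polar h.
Proof. by move=> e x y; rewrite /polar !e. Qed.

Lemma polar_quadraticDl (Q : 'M['F_2]_n) (l : vec n) (c : 'F_2) g :
  g =1 (fun w => qform Q w + dot l w + c) ->
  forall x x' y, polar g (x + x') y = polar g x y + polar g x' y.
Proof.
move=> gE x x' y; have polarE z : polar g z y = polar (qform Q) z y.
  rewrite (eq_polar gE) (polarD (fun w => qform Q w + dot l w) (fun=> c)).
  by rewrite (polarD (qform Q) (dot l)) polar_const polar_dot !addr0.
rewrite !polarE !polar_qform -big_split; apply: eq_bigr => i _.
by rewrite -big_split; apply: eq_bigr => j _; rewrite /= !mxE; ring.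
Qed.

End Polar.

Definition deriv2 {n} (F : vec n -> vec n) (a y : vec n) : vec n := deriv F a y + deriv F a 0.

(* For quadratic [F] this is the radical of the alternating form [polar (dot b \o F)]. *)
Definition radical {n} (F : vec n -> vec n) (b : vec n) : {set vec n} :=
  [set a | [forall x, dot b (deriv F a x) == dot b (deriv F a 0)]].

Section Radical.
Context {n : nat}.
Variable F : vec n -> vec n.
Implicit Types (a b u v x y : vec n).

Lemma radicalP b a :
  reflect (forall x, dot b (deriv F a x) = dot b (deriv F a 0)) (a \in radical F b).
Proof. by rewrite inE; apply: (iffP forallP) => aR x; apply/eqP. Qed.

Lemma mem_radical b a : (a \in radical F b) = [forall x, dot b (deriv2 F a x) == 0].
Proof. by rewrite inE; apply: eq_forallb => x; rewrite /deriv2 dotDr F2_addr_eq0. Qed.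

Lemma radical_subspace b : is_subspace (radical F b).
Proof.
split; first by apply/radicalP => x; rewrite !deriv0.
move=> u v /radicalP uR /radicalP vR; apply/radicalP => x.
by rewrite !deriv_addl [LHS]dotDr [RHS]dotDr (uR x) (vR (x + u)) (vR (0 + u)).
Qed.

Lemma dot_deriv2 b a y : dot b (deriv2 F a y) = polar (fun x => dot b (F x)) y a.
Proof. by rewrite /deriv2 /deriv /polar add0r !dotDr; ring. Qed.

Lemma deriv2_self a : deriv2 F a a = 0.
Proof. by rewrite /deriv2 /deriv addvv add0r addrA addvK addvv. Qed.

End Radical.

Section Walsh.
Context {n : nat}.
Variable F : vec n -> vec n.

Lemma walsh_sqr_deriv b a :
  walsh F b a ^+ 2 = \sum_u \sum_x sgn (dot b (deriv F u x) + dot u a).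
Proof.
rewrite expr2 /walsh mulr_suml exchange_big /=; apply: eq_bigr => x _.
rewrite mulr_sumr (reindex_inj (addrI x)) /=; apply: eq_bigr => u _.
by rewrite -sgnD /deriv !dotDr dotDl; congr sgn; ring: F2_two.
Qed.

Lemma parseval b : \sum_a walsh F b a ^+ 2 = (2 ^ n * 2 ^ n)%N%:Z.
Proof.
under eq_bigr do rewrite walsh_sqr_deriv.
rewrite exchange_big (bigD1 0) //= [X in _ + X]big1 ?addr0 => [|u un0].
  under eq_bigr do under eq_bigr do rewrite deriv0 dot0r dot0l addr0.
  by rewrite sumr_const sumr_const card_vec -mulrnA -natz.
rewrite exchange_big big1 // => x _.
under eq_bigr do rewrite sgnD.
rewrite -mulr_sumr sum_sgn_additiveT => [|y z]; last exact: dotDr.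
by rewrite dot_all0 (negbTE un0) mulr0.
Qed.

Lemma walsh_neq0 b : exists a, walsh F b a != 0.
Proof.
apply/existsP; apply: contraT => /existsPn W0.
have := parseval b; rewrite big1 => [|a _]; last by rewrite (eqP (negPn (W0 a))) expr0n.
by move=> [] /esym /eqP; rewrite muln_eq0 expn_eq0.
Qed.

End Walsh.

Section Quadratic.
Context {n : nat}.
Variable F : vec n -> vec n.
Hypothesis Fq : quadratic F.
Implicit Types (a b u x : vec n).

Lemma deriv2D a : {morph deriv2 F a : y z / y + z}.
Proof.
move=> y z; apply: dot_inj => b; have [Q [l [c gE]]] := Fq b.
by rewrite dotDr !dot_deriv2; apply: polar_quadraticDl gE _ _ _.
Qed.

Lemma exists_radical x : x != 0 -> exists2 b, b != 0 & x \in radical F b.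
Proof.
move=> xn0; have [b bn0 b0] := additive_annihilator (deriv2D x) xn0 (deriv2_self F x).
by exists b; rewrite // mem_radical; apply/forallP => y; rewrite b0.
Qed.

Lemma walsh_sqr_radical b a : walsh F b a ^+ 2 =
  (2 ^ n)%N%:Z * \sum_(u in radical F b) sgn (dot b (deriv F u 0) + dot u a).
Proof.
rewrite walsh_sqr_deriv mulr_sumr [RHS]big_mkcond; apply: eq_bigr => u _.
have -> : \sum_x sgn (dot b (deriv F u x) + dot u a) =
    sgn (dot b (deriv F u 0) + dot u a) * \sum_x sgn (dot b (deriv2 F u x)).
  rewrite mulr_sumr; apply: eq_bigr => x _; rewrite -sgnD /deriv2 dotDr.
  by congr sgn; ring: F2_two.
rewrite sum_sgn_additiveT => [|y z]; last by rewrite deriv2D dotDr.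
by rewrite -mem_radical; case: (u \in radical F b); rewrite ?mulr0 // mulrC.
Qed.

Lemma walsh_sqr b a : walsh F b a ^+ 2 =
  if [forall u in radical F b, dot b (deriv F u 0) + dot u a == 0]
  then 2 ^+ (n + dimS (radical F b)) else 0.
Proof.
have phiD : {in radical F b &,
    {morph (fun u => dot b (deriv F u 0) + dot u a) : u v / u + v}}.
  move=> u v _ /radicalP vR /=.
  by rewrite deriv_addl (dotDr b (deriv F u 0)) (vR (0 + u)) dotDl; ring.
rewrite walsh_sqr_radical (sum_sgn_additive (radical_subspace F b) phiD).
by case: ifP => _; rewrite ?mulr0 // (card_subspace (radical_subspace F b)) !PoszX2 -exprD.
Qed.

Lemma has_amplitude_radical b : has_amplitude F b (dimS (radical F b)).
Proof.
apply/andP; split.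
  by apply/forallP => a; rewrite -sqrf_eq0 walsh_sqr; case: ifP => _; rewrite eqxx ?orbT.
have [a Wa] := walsh_neq0 F b; apply/existsP; exists a.
by move: Wa; rewrite -sqrf_eq0 walsh_sqr; case: ifP; rewrite ?eqxx.
Qed.

Hypothesis Fapn : APN F.

Lemma Vb_radical b : b != 0 -> Vb F b = radical F b.
Proof.
move=> bn0; apply/setP => a; rewrite mem_Vb.
have [-> | an0] := eqVneq a 0; first by case: (radical_subspace F b).
rewrite /=; apply/idP/radicalP => [/orP [] /eqP imE x | aR].
- by move: (mem_imD F a x) (mem_imD F a 0); rewrite imE !inE => /eqP-> /eqP->.
- by move: (mem_imD F a x) (mem_imD F a 0); rewrite imE !inE => /eqP-> /eqP->.
case: (F2_0or1 (dot b (deriv F a 0))) => a0.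
  by rewrite (APN_imD_eq Fapn an0 (card_Hb bn0)) ?eqxx // => x; rewrite inE aR a0.
by rewrite (APN_imD_eq Fapn an0 (card_Hbbar bn0)) ?eqxx ?orbT // => x; rewrite inE aR a0.
Qed.

Lemma has_amplitude_Vb b : b != 0 -> has_amplitude F b (dimS (Vb F b)).
Proof. by move=> bn0; rewrite Vb_radical //; apply: has_amplitude_radical. Qed.

Lemma has_amplitudeE b k : b != 0 -> has_amplitude F b k = (dimS (Vb F b) == k).
Proof.
move=> bn0; apply/idP/eqP => [ampk | <-]; last exact: has_amplitude_Vb.
exact: has_amplitude_inj (has_amplitude_Vb bn0) ampk.
Qed.

Lemma Vb_dim_gt0P b :
  b != 0 -> reflect (exists2 x, x \in Vb F b & x != 0) (0 < dimS (Vb F b))%N.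
Proof. by move=> bn0; rewrite Vb_radical //; apply/subspace_dim_gt0P/radical_subspace. Qed.

Lemma VF_partition : vs_partition (VF F).
Proof.
split=> [U /imsetP [b] | x xn0].
  rewrite inE => /andP [bn0 /(Vb_dim_gt0P bn0) [y yV yn0]] ->.
  split; first by rewrite Vb_radical //; apply: radical_subspace.
  by apply: contraNneq yn0 => V0; move: yV; rewrite V0 inE.
have [b bn0 xR] := exists_radical xn0; rewrite -Vb_radical // in xR.
exists (Vb F b); split.
  by split=> //; apply/imsetP; exists b; rewrite // inE bn0; apply/(Vb_dim_gt0P bn0); exists x.
by move=> _ [/imsetP [b' _ ->] xV']; congr (Vb F _); apply: Vb_mem_inj xn0 xR xV'.
Qed.

Lemma card_VF_dim d : (0 < d)%N ->
  #|[set U in VF F | dimS U == d]| = #|[set b | (b != 0) && has_amplitude F b d]|.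
Proof.
move=> d_gt0; pose B := [set b | (b != 0) && (dimS (Vb F b) == d)].
have -> : [set U in VF F | dimS U == d] = Vb F @: B.
  apply/setP => U; rewrite !inE /VF; apply/andP/imsetP => [[/imsetP [b] + -> dV] | [b + ->]].
    by rewrite inE => /andP [bn0 _]; exists b; rewrite // inE bn0.
  rewrite inE => /andP [bn0 dV]; split=> //.
  by apply/imsetP; exists b; rewrite // inE bn0 (eqP dV).
rewrite card_in_imset => [|b b']; last first.
  rewrite !inE => /andP [bn0 /eqP dV] /andP [b'n0 _] eV.
  have [x xV xn0] : exists2 x, x \in Vb F b & x != 0 by apply/(Vb_dim_gt0P bn0); rewrite dV.
  by apply: (Vb_mem_inj xn0 xV); rewrite -eV.
apply: eq_card => b; rewrite !inE.
by have [-> | bn0] := eqVneq b 0; rewrite ?eqxx //= has_amplitudeE.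
Qed.

End Quadratic.

Theorem mainTheorem2 (n : nat) (F : 'rV['F_2]_n -> 'rV['F_2]_n) :
  ~~ odd n -> quadratic F -> APN F ->
  (forall b : 'rV['F_2]_n, b != 0 -> has_amplitude F b (dimS (Vb F b))) /\
  ((forall (b : 'rV['F_2]_n) (k : nat), b != 0 -> has_amplitude F b k -> ~~ odd k) ->
   vs_partition (VF F) /\
   (forall d : nat, (1 <= d)%N ->
      #|[set U in VF F | dimS U == d]| =
      #|[set b : 'rV['F_2]_n | (b != 0) && has_amplitude F b d]|)).
Proof.
move=> _ Fq Fapn; split=> [b | _]; first exact: has_amplitude_Vb.
by split; [apply: VF_partition | apply: card_VF_dim].
Qed.
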